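(* Consider the program \[\Pi(\theta)=\max_{P}\int_0^\infty P(y)\,dy\quad\text{s.t.}\quad \lambda\int_0^\infty w_-(P(y))\,dy\le\theta,\] over functions $P:[0,\infty)\to[0,1]$ that are decreasing and right continuous. Its maximum value is $\mu^*\theta/\lambda$, and the unique optimal $P^*$ is \[P^*(y)=\begin{cases}p^* & \text{if } y<\frac{\mu^*\theta}{p^*\lambda},\\ 0 & \text{if } y\ge \frac{\mu^*\theta}{p^*\lambda}.\end{cases}\]
   Context: $\theta>0$, $\lambda>0$ are constants. $w_-:[0,1]\to[0,1]$ is strictly increasing, thrice differentiable, with $w_-(0)=0$, $w_-(1)=1$, $w_-'(0)>1$, $w_-'(1)>1$, $w_-'''>0$. $\mu^*=\max_{p\in(0,1]}p/w_-(p)$, and $p^*\in(0,1)$ is the unique point with $\mu^*w_-(p^* )=p^*$. ($P(y)$ is interpreted as the tail $P(T>y)$ of a nonnegative random price $T$.) *)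

From HB Require Import structures.
From mathcomp Require Import all_boot all_order all_algebra.
From mathcomp Require Import all_classical all_reals all_analysis.
Set Implicit Arguments. Unset Strict Implicit. Unset Printing Implicit Defensive.
Import Order.TTheory GRing.Theory Num.Theory.
Import numFieldNormedType.Exports.
Local Open Scope classical_set_scope.
Local Open Scope ring_scope.

(* Assumptions on the probability weighting function w_- : [0,1] -> [0,1].
   w is given as a function R -> R; only its values on [0,1] matter.
   Thrice differentiability on [0,1] (one-sided at endpoints) is rendered as
   thrice differentiability on R (every such function on [0,1] extends). *)
Definition weighting (R : realType) (w : R -> R) : Prop :=
  (forall x, 0 <= x <= 1 -> 0 <= w x <= 1) /\
  (forall x y, 0 <= x -> x < y -> y <= 1 -> w x < w y) /\
  w 0 = 0 /\ w 1 = 1 /\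
  (forall x, derivable w x 1) /\
  (forall x, derivable (derive1 w) x 1) /\
  (forall x, derivable (derive1n 2 w) x 1) /\
  1 < derive1 w 0 /\ 1 < derive1 w 1 /\
  (forall x, 0 <= x <= 1 -> 0 < derive1n 3 w x).

Definition is_mu_star (R : realType) (w : R -> R) (mu : R) : Prop :=
  (forall p, 0 < p <= 1 -> p / w p <= mu) /\
  (exists2 p, 0 < p <= 1 & p / w p = mu).

Definition is_p_star (R : realType) (w : R -> R) (mu ps : R) : Prop :=
  [/\ 0 < ps < 1, mu * w ps = ps &
      (forall p, 0 < p < 1 -> mu * w p = p -> p = ps)].

Definition admissible (R : realType) (P : R -> R) : Prop :=
  [/\ (forall y, 0 <= y -> 0 <= P y <= 1),
      (forall x y, 0 <= x -> x <= y -> P y <= P x)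
    & (forall y, 0 <= y -> P x @[x --> y^'+] --> P y)].

Definition integral0oo (R : realType) (f : R -> R) : \bar R :=
  (\int[@lebesgue_measure R]_(y in `[0%R, +oo[%classic) (f y)%:E)%E.

Definition feasible (R : realType) (w : R -> R) (lam theta : R) (P : R -> R)
  : Prop :=
  admissible P /\ (lam%:E * integral0oo (fun y => w (P y)) <= theta%:E)%E.

Definition Pstar (R : realType) (mu ps lam theta : R) (y : R) : R :=
  if y < mu * theta / (ps * lam) then ps else 0.

From HB Require Import structures.
From mathcomp Require Import all_boot all_order all_algebra.
From mathcomp Require Import all_classical all_reals all_analysis.
From mathcomp Require Import ring lra measurable_realfun.
Import Order.TTheory GRing.Theory Num.Theory.
Import numFieldNormedType.Exports.
Local Open Scope classical_set_scope.
Local Open Scope ring_scope.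

(* Since p <= mu* w(p) on [0,1], every feasible P satisfies
   int P <= mu* int w(P) <= mu* theta / lambda, and P* attains this bound.
   If P is optimal, the nonnegative function mu* w(P) - P has integral zero
   and is right continuous, so it vanishes: P only takes fixed points of
   p |-> mu* w(p), i.e. 0 and p* (the value 1 is excluded because w'(1) > 1
   forces mu* > 1).  A nonincreasing right-continuous {0, p*}-valued function
   with integral p* a is p* times the indicator of [0, a). *)

Lemma near_at_right_interval {R : realType} {y : R} {Q : R -> Prop} :
  (\forall x \near y^'+, Q x) -> exists2 d, 0 < d & forall x, y < x < y + d -> Q x.
Proof.
move=> /nbhs_ballP[e /= e0 yeQ]; exists e => // x /andP[yx xye].
by apply: yeQ; [rewrite /ball /= ltr0_norm ?subr_lt0 //; lra | by []].
Qed.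

Section integral_on_halfline.
Context {R : realType}.
Local Notation halfline := (`[0%R, +oo[%classic : set R).
Implicit Types (f g : R -> R) (c u v : R).

Lemma indic_itv_coE u v y :
  \1_(`[u, v[%classic) y = (if (u <= y) && (y < v) then 1 else 0 : R).
Proof.
rewrite indicE; case: ifP => h; first by rewrite mem_set //= in_itv /= h.
by rewrite memNset //= in_itv /= h.
Qed.

Lemma nonincreasing_halfline_measurable {f} :
  (forall x y, 0 <= x -> x <= y -> f y <= f x) -> measurable_fun halfline f.
Proof.
move=> f_ni.
have mf0 : measurable_fun halfline (fun y => f (Num.max y 0)).
  apply: nonincreasing_measurable => // x y xy.
  apply: f_ni; first by rewrite le_max lexx orbT.
  by rewrite ge_max !le_max xy lexx !orbT.
apply: eq_measurable_fun mf0 => y; rewrite inE /= in_itv /= andbT => y0.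
by rewrite max_l.
Qed.

Lemma eq_integral0oo {f g} :
  (forall y, 0 <= y -> f y = g y) -> integral0oo f = integral0oo g.
Proof.
by move=> fg; apply: eq_integral => y; rewrite inE /= in_itv /= andbT => /fg ->.
Qed.

Lemma le_integral0oo {f g} :
  measurable_fun halfline f -> measurable_fun halfline g ->
  (forall y, 0 <= y -> 0 <= f y <= g y) -> (integral0oo f <= integral0oo g)%E.
Proof.
move=> mf mg fg; apply: ge0_le_integral => //.
- by move=> y /=; rewrite in_itv /= andbT => /fg /andP[? _]; rewrite lee_fin.
- exact/measurable_EFinP.
- exact/measurable_EFinP.
- by move=> y /=; rewrite in_itv /= andbT => /fg /andP[_ ?]; rewrite lee_fin.
Qed.

Lemma integral0oo_ge0 {f} : (forall y, 0 <= y -> 0 <= f y) -> (0 <= integral0oo f)%E.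
Proof.
by move=> f0; apply: integral_ge0 => y /=; rewrite in_itv /= andbT lee_fin => /f0.
Qed.

Lemma integral0ooZl c f : 0 <= c -> (forall y, 0 <= y -> 0 <= f y) ->
  measurable_fun halfline f ->
  integral0oo (fun y => c * f y) = (c%:E * integral0oo f)%E.
Proof.
move=> c0 f0 mf; rewrite /integral0oo; under eq_integral do rewrite EFinM.
apply: ge0_integralZl => //; first exact/measurable_EFinP.
by move=> y /=; rewrite in_itv /= andbT lee_fin => /f0.
Qed.

Lemma integral0ooD f g :
  (forall y, 0 <= y -> 0 <= f y) -> (forall y, 0 <= y -> 0 <= g y) ->
  measurable_fun halfline f -> measurable_fun halfline g ->
  integral0oo (fun y => f y + g y) = (integral0oo f + integral0oo g)%E.
Proof.
move=> f0 g0 mf mg; rewrite /integral0oo; under eq_integral do rewrite EFinD.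
apply: ge0_integralD => //; try exact/measurable_EFinP.
- by move=> y /=; rewrite in_itv /= andbT lee_fin => /f0.
- by move=> y /=; rewrite in_itv /= andbT lee_fin => /g0.
Qed.

Lemma measurable_step c u v :
  measurable_fun halfline (fun y => c * \1_(`[u, v[%classic) y).
Proof. exact: measurable_funM (measurable_cst c) (measurable_indic _). Qed.

Lemma integral0oo_step c u v : 0 <= c -> 0 <= u <= v ->
  integral0oo (fun y => c * \1_(`[u, v[%classic) y) = (c * (v - u))%:E.
Proof.
move=> c0 /andP[u0 uv]; rewrite /integral0oo.
have := @integralZl_indic _ _ _ (@lebesgue_measure R) _ (measurable_itv `[0, +oo[)
  (fun=> `[u, v[%classic) c; rewrite /= => -> //; last by move=> /lt_geF; rewrite c0.
rewrite integral_indic // setIidl; last first.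
  by move=> x /=; rewrite !in_itv /= => /andP[ux _]; rewrite (le_trans u0 ux).
rewrite [X in (_ * X)%E]lebesgue_measure_itv /= lte_fin.
case: ltP => [uv'|vu]; first by rewrite -EFinD -EFinM.
by have -> : v - u = 0 by apply/eqP; rewrite subr_eq0 eq_le uv vu.
Qed.

(* A positive gap at z persists on some [z, z + d) by right continuity, and
   this bump of positive integral contradicts the equality of the integrals. *)
Lemma pointwise_eq_of_integral0oo_eq {f g r} :
  measurable_fun halfline f -> measurable_fun halfline g ->
  (forall y, 0 <= y -> 0 <= f y <= g y) ->
  (forall z, 0 <= z -> g x - f x @[x --> z^'+] --> g z - f z) ->
  integral0oo f = r%:E -> integral0oo g = r%:E ->
  forall z, 0 <= z -> f z = g z.
Proof.
move=> mf mg fg gf_rc If Ig z z0; apply/eqP.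
have /andP[_ fgz] := fg z z0; rewrite eq_le fgz /= leNgt; apply/negP => fgz'.
set e := g z - f z; have e0 : 0 < e by rewrite subr_gt0.
have e2 : e / 2 < e by lra.
have [d d0 gf_gt] := near_at_right_interval (cvgr_gt _ (gf_rc z z0) _ e2).
have bump_le y : 0 <= y -> 0 <= f y + e / 2 * \1_(`[z, z + d[%classic) y <= g y.
  move=> y0; have /andP[fy0 fgy] := fg y y0; rewrite indic_itv_coE.
  case: ifP => [/andP[zy yzd]|_]; last by rewrite mulr0 addr0 fy0.
  rewrite mulr1; apply/andP; split; first lra.
  case: (ltP z y) => [zy'|yz]; first by have := gf_gt y; rewrite zy' yzd => /(_ isT); lra.
  have -> : y = z by apply/eqP; rewrite eq_le zy yz.
  rewrite /e; lra.
have step0 y : 0 <= y -> 0 <= e / 2 * \1_(`[z, z + d[%classic) y.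
  by move=> _; apply: mulr_ge0; [lra | rewrite indic_itv_coE; case: ifP].
have := le_integral0oo (measurable_funD mf (measurable_step _ _ _)) mg bump_le.
rewrite integral0ooD //;
  [|by move=> y y0; case/andP: (fg y y0) | exact: measurable_step].
rewrite If Ig integral0oo_step; [|lra|by rewrite z0 lerDl ltW].
rewrite -EFinD lee_fin (addrC z) addrK.
have : 0 < e / 2 * d by apply: mulr_gt0; lra.
lra.
Qed.

Lemma two_valued_nonincreasing_step (P : R -> R) c a :
  0 < c ->
  (forall x y, 0 <= x -> x <= y -> P y <= P x) ->
  (forall y, 0 <= y -> P x @[x --> y^'+] --> P y) ->
  (forall y, 0 <= y -> P y = 0 \/ P y = c) ->
  integral0oo P = (c * a)%:E ->
  forall y, 0 <= y -> P y = if y < a then c else 0.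
Proof.
move=> c0 P_ni P_rc P2 IP y y0.
have mP := nonincreasing_halfline_measurable P_ni.
have Istep b : 0 <= b ->
    integral0oo (fun x => c * \1_(`[0, b[%classic) x) = (c * b)%:E.
  by move=> b0; rewrite integral0oo_step ?subr0 ?lexx ?b0 // ltW.
case: (ltP y a) => [ya|ay]; case: (P2 y y0) => // Py; exfalso.
- have le_step z : 0 <= z -> 0 <= P z <= c * \1_(`[0, y[%classic) z.
    move=> z0; rewrite indic_itv_coE z0 /=; case: ifP => [_|/negbT].
      by rewrite mulr1; case: (P2 z z0) => ->; lra.
    rewrite -leNgt mulr0 => yz; have := P_ni y z y0 yz; rewrite Py.
    by case: (P2 z z0) => ->; lra.
  have := le_integral0oo mP (measurable_step _ _ _) le_step.
  rewrite IP Istep // lee_fin ler_pM2l // => ay; lra.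
- have /filter_ex[x [yx Px]] : \forall x \near y^'+, y < x /\ c / 2 < P x.
    near=> x; split; near: x; first exact: nbhs_right_gt.
    by apply: cvgr_gt _ (P_rc y y0) _ _; rewrite Py; lra.
  have {}Px : P x = c by case: (P2 x (le_trans y0 (ltW yx))) Px => ->; lra.
  have le_step z : 0 <= z -> 0 <= c * \1_(`[0, x[%classic) z <= P z.
    move=> z0; rewrite indic_itv_coE z0 /=; case: ifP => [zx|_].
      by rewrite mulr1 -{2}Px ltW //= P_ni // ltW.
    by rewrite mulr0 lexx; case: (P2 z z0) => ->; lra.
  have := le_integral0oo (measurable_step _ _ _) mP le_step.
  rewrite IP Istep ?(le_trans y0 (ltW yx)) // lee_fin ler_pM2l // => xa; lra.
Unshelve. all: by end_near.
Qed.

End integral_on_halfline.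

Lemma Pstar_indicE {R : realType} (mu ps lam theta y : R) : 0 <= y ->
  Pstar mu ps lam theta y = ps * \1_(`[0, mu * theta / (ps * lam)[%classic) y.
Proof.
by move=> y0; rewrite /Pstar indic_itv_coE y0 /=; case: ifP; rewrite ?mulr1 ?mulr0.
Qed.

Lemma admissible_Pstar {R : realType} (mu ps lam theta : R) :
  0 <= ps <= 1 -> admissible (Pstar mu ps lam theta).
Proof.
rewrite /Pstar; set a := mu * theta / (ps * lam) => /andP[ps0 ps1]; split.
- by move=> y _; case: ifP; rewrite ?ps0 ?ps1 ?lexx ?ler01.
- move=> x y _ xy; case: (ltP y a) => [ya|ay]; first by rewrite (le_lt_trans xy ya).
  by case: ifP.
- move=> y _; apply: cvg_near_cst; case: (ltP y a) => [ya|ay].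
    by near=> x; rewrite ifT //; near: x; exact: nbhs_right_lt.
  near=> x; rewrite ifF //; apply/negbTE; rewrite -leNgt.
  by apply/(le_trans ay)/ltW; near: x; exact: nbhs_right_gt.
Unshelve. all: by end_near.
Qed.

Section weighted_program.
Context {R : realType} {w : R -> R} (hw : weighting w).
Implicit Types P : R -> R.

Lemma weighting_gt0 p : 0 < p <= 1 -> 0 < w p.
Proof.
have [_ [w_incr [w0 _]]] := hw; move=> /andP[p0 p1].
by rewrite -w0; apply: w_incr.
Qed.

Lemma weighting_continuous : continuous w.
Proof.
have [_ [_ [_ [_ [dw _]]]]] := hw; move=> x.
exact/differentiable_continuous/derivable1_diffP.
Qed.

Lemma weighting_comp_nonincreasing P : admissible P ->
  forall x y, 0 <= x -> x <= y -> w (P y) <= w (P x).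
Proof.
have [_ [w_incr _]] := hw; case=> P01 P_ni _ x y x0 xy.
have /andP[Py0 _] := P01 y (le_trans x0 xy); have /andP[_ Px1] := P01 x x0.
have [PyPx|PxPy] := ltP (P y) (P x); first exact/ltW/w_incr.
by have -> : P y = P x by apply/eqP; rewrite eq_le PxPy P_ni.
Qed.

Lemma weighting_below_diag : exists2 p, 0 < p < 1 & w p < p.
Proof.
have [_ [_ [_ [w1 [dw [_ [_ [_ [dw1 _]]]]]]]]] := hw.
have dq : h^-1 *: ((w \o shift 1) (h *: 1) - w 1) @[h --> (0 : R)^'] --> derive1 w 1.
  by rewrite derive1E; exact: dw.
have /filter_ex[h [/andP[h_gt h_lt] dqh]] : \forall h \near (0 : R)^'-,
    -1 < h < 0 /\ 1 < h^-1 *: ((w \o shift 1) (h *: 1) - w 1).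
  near=> h; split; last by near: h; exact: cvgr_gt _ (cvg_dnbhs_at_left dq) _ dw1.
  by apply/andP; split; near: h; [exact: nbhs_left_gt | exact: nbhs_left_lt].
exists (h + 1); first by apply/andP; split; lra.
move: dqh; rewrite /= w1 /GRing.scale /= mulr1 -(ltr_nM2l h_lt) mulr1 mulrA.
rewrite divff ?lt_eqF // mul1r; lra.
Unshelve. all: by end_near.
Qed.

Context {mu : R} (hmu : is_mu_star w mu).

Lemma mu_star_gt1 : 1 < mu.
Proof.
have [p /andP[p0 p1] wpp] := weighting_below_diag.
have wp0 : 0 < w p by apply: weighting_gt0; rewrite p0 ltW.
apply: (lt_le_trans _ (hmu.1 p _)); last by rewrite p0 ltW.
by rewrite ltr_pdivlMr // mul1r.
Qed.

Lemma le_mu_star_weighting p : 0 <= p <= 1 -> p <= mu * w p.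
Proof.
move=> /andP[p0 p1]; have [->|p_gt0] := eqVneq p 0.
  by have [_ [_ [-> _]]] := hw; rewrite mulr0.
have {p0 p_gt0} p0 : 0 < p by rewrite lt_neqAle eq_sym p_gt0.
have wp0 : 0 < w p by apply: weighting_gt0; rewrite p0.
by rewrite -ler_pdivrMr // hmu.1 // p0.
Qed.

Context {ps : R} (hps : is_p_star w mu ps).

Lemma mu_star_fixed_points p :
  0 <= p <= 1 -> mu * w p = p -> p = 0 \/ p = ps.
Proof.
move=> /andP[p0 p1] fixp; have [->|p_neq0] := eqVneq p 0; [by left | right].
move: fixp; have [->|p_neq1 fixp] := eqVneq p 1.
  by have [_ [_ [_ [-> _]]]] := hw; have := mu_star_gt1; lra.
case: hps => _ _; apply => //.
by rewrite lt_neqAle eq_sym p_neq0 p0 lt_neqAle p_neq1 p1.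
Qed.

Context {lam theta : R} (hlam : 0 < lam) (htheta : 0 < theta).

Let ps_gt0 : 0 < ps. Proof. by case: hps => /andP[]. Qed.

Let threshold_ge0 : 0 <= mu * theta / (ps * lam).
Proof.
by apply/ltW/divr_gt0; apply: mulr_gt0 => //; exact: lt_trans ltr01 mu_star_gt1.
Qed.

Lemma Pstar_threshold : mu * theta / lam = ps * (mu * theta / (ps * lam)).
Proof. by field; rewrite !gt_eqF. Qed.

Lemma admissible_weighting_measurable P : admissible P ->
  measurable_fun (`[0%R, +oo[%classic : set R) (fun y => mu * w (P y)).
Proof.
move=> P_adm; apply: measurable_funM (measurable_cst _) _.
by apply: nonincreasing_halfline_measurable; exact: weighting_comp_nonincreasing.
Qed.

Lemma admissible_le_mu_weighting P : admissible P ->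
  forall y, 0 <= y -> 0 <= P y <= mu * w (P y).
Proof.
case=> P01 _ _ y y0; have P01y := P01 y y0; case/andP: (P01y) => -> _.
exact: le_mu_star_weighting P01y.
Qed.

Lemma integral0oo_le_mu_weighting P : admissible P ->
  (integral0oo P <= integral0oo (fun y => (mu * w (P y))%R))%E.
Proof.
move=> P_adm; have [_ P_ni _] := P_adm.
apply: le_integral0oo.
- exact: nonincreasing_halfline_measurable P_ni.
- exact: admissible_weighting_measurable.
- exact: admissible_le_mu_weighting.
Qed.

Lemma feasible_mu_weighting_integral0oo P : feasible w lam theta P ->
  exists2 r, integral0oo (fun y => mu * w (P y)) = r%:E & r <= mu * theta / lam.
Proof.
case=> P_adm; have [P01 _ _] := P_adm; have [w01 _] := hw.
have w0 y : 0 <= y -> 0 <= w (P y) by move=> y0; case/andP: (w01 _ (P01 y y0)).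
have mu0 : 0 <= mu by have := mu_star_gt1; lra.
rewrite integral0ooZl //; last first.
  by apply: nonincreasing_halfline_measurable; exact: weighting_comp_nonincreasing.
have := integral0oo_ge0 w0; case: integral0oo => [r _| _ |//].
- rewrite -EFinM lee_fin => lam_r; exists (mu * r) => //.
  by rewrite -mulrA ler_wpM2l // ler_pdivlMr // mulrC.
- by rewrite mulry gtr0_sg // mul1e.
Qed.

Lemma feasible_integral0oo_le P : feasible w lam theta P ->
  (integral0oo P <= (mu * theta / lam)%:E)%E.
Proof.
move=> P_feas; have [r Ir r_le] := feasible_mu_weighting_integral0oo _ P_feas.
by rewrite (le_trans (integral0oo_le_mu_weighting _ P_feas.1)) // Ir lee_fin.
Qed.

Lemma optimal_fixed_point P : feasible w lam theta P ->
  integral0oo P = (mu * theta / lam)%:E ->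
  forall z, 0 <= z -> P z = mu * w (P z).
Proof.
move=> P_feas IP; have [_ P_ni P_rc] := P_feas.1.
have [r Ir r_le] := feasible_mu_weighting_integral0oo _ P_feas.
have r_eq : r = mu * theta / lam.
  apply/eqP; rewrite eq_le r_le -lee_fin -IP -Ir.
  exact: integral0oo_le_mu_weighting _ P_feas.1.
apply: (pointwise_eq_of_integral0oo_eq _ (admissible_weighting_measurable _ P_feas.1) _ _ IP).
- exact: nonincreasing_halfline_measurable P_ni.
- exact: admissible_le_mu_weighting P_feas.1.
- move=> z z0; apply: cvgB (P_rc z z0); apply: cvgM; first exact: cvg_cst.
  exact: cvg_comp (P_rc z z0) (weighting_continuous _).
- by rewrite Ir r_eq.
Qed.

Lemma optimal_eq_Pstar P : feasible w lam theta P ->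
  integral0oo P = (mu * theta / lam)%:E ->
  forall y, 0 <= y -> P y = Pstar mu ps lam theta y.
Proof.
move=> P_feas IP; have [P01 P_ni P_rc] := P_feas.1.
apply: two_valued_nonincreasing_step => //; last by rewrite IP Pstar_threshold.
move=> y y0; apply: mu_star_fixed_points; first exact: P01.
by rewrite -optimal_fixed_point.
Qed.

Lemma integral0oo_Pstar :
  integral0oo (Pstar mu ps lam theta) = (mu * theta / lam)%:E.
Proof.
rewrite (eq_integral0oo (Pstar_indicE mu ps lam theta)) integral0oo_step.
- by rewrite subr0 Pstar_threshold.
- exact: ltW.
- by rewrite lexx threshold_ge0.
Qed.

Lemma feasible_Pstar : feasible w lam theta (Pstar mu ps lam theta).
Proof.
have [/andP[_ ps1] mu_ps _] := hps; have [_ [_ [w0 _]]] := hw.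
split; first by apply: admissible_Pstar; rewrite (ltW ps_gt0) (ltW ps1).
have wPstar y : 0 <= y -> w (Pstar mu ps lam theta y)
    = w ps * \1_(`[0, mu * theta / (ps * lam)[%classic) y.
  by move=> y0; rewrite /Pstar indic_itv_coE y0 /=; case: ifP; rewrite ?mulr1 ?mulr0 ?w0.
rewrite (eq_integral0oo wPstar) integral0oo_step; last 2 first.
- by apply/ltW/weighting_gt0; rewrite ps_gt0 ltW.
- by rewrite lexx threshold_ge0.
have mu_neq0 : mu != 0 by rewrite gt_eqF // (lt_trans ltr01 mu_star_gt1).
have -> : w ps = ps / mu by rewrite -[in RHS]mu_ps mulrAC divff ?mul1r.
rewrite -EFinM lee_fin subr0 (_ : lam * _ = theta) //.
by field; rewrite mu_neq0 !gt_eqF.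
Qed.

End weighted_program.

Theorem proposition1 (R : realType) (theta lam : R) (w : R -> R) (mu ps : R)
  (htheta : 0 < theta) (hlam : 0 < lam)
  (hw : weighting w) (hmu : is_mu_star w mu) (hps : is_p_star w mu ps) :
  [/\ feasible w lam theta (Pstar mu ps lam theta),
      integral0oo (Pstar mu ps lam theta) = (mu * theta / lam)%:E,
      (forall P, feasible w lam theta P ->
         (integral0oo P <= (mu * theta / lam)%:E)%E)
    & (forall P, feasible w lam theta P ->
         integral0oo P = (mu * theta / lam)%:E ->
         forall y, 0 <= y -> P y = Pstar mu ps lam theta y)].
Proof.
split.
- exact: (feasible_Pstar hw hmu hps hlam htheta).
- exact: (integral0oo_Pstar hw hmu hps hlam htheta).
- exact: (feasible_integral0oo_le hw hmu hlam).
- exact: (optimal_eq_Pstar hw hmu hps hlam).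
Qed.
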